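(* Let $\mathcal{X}$ be a finite set, $\pi$ a probability mass function on $\mathcal{X}$ with full support, $P$ a $\pi$-stationary transition matrix, and let a group $\mathcal{G}$ act on $\mathcal{X}$ with orbits $(\mathcal{O}_i)_{i=1}^k$ and Gibbs orbit kernel $G$. Then $D^\pi_{KL}(GPG\|\Pi)=D^{\overline{\pi}}_{KL}(\overline{P}\|\overline{\Pi})$.
   Context: $G(x,y)=\pi(y)/\pi(\mathcal{O}(x))$ for $y$ in the orbit $\mathcal{O}(x)$ of $x$, else $0$, with $\pi(A)=\sum_{z\in A}\pi(z)$. $\Pi$ is the matrix with every row equal to $\pi$. $\overline{\pi}=(\pi(\mathcal{O}_1),\dots,\pi(\mathcal{O}_k))$, $\overline{\Pi}$ is the $k\times k$ matrix with every row $\overline{\pi}$, and $\overline{P}(i,j)=\frac{1}{\pi(\mathcal{O}_i)}\sum_{x\in\mathcal{O}_i,y\in\mathcal{O}_j}\pi(x)P(x,y)$. For a distribution $\mu$ and transition matrices $K,L$ on the same finite set, $D^\mu_{KL}(K\|L)=\sum_{x,y}\mu(x)K(x,y)\log\frac{K(x,y)}{L(x,y)}$ with $0\log(0/a)=0$. *)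

From HB Require Import structures.
From mathcomp Require Import all_boot all_order all_algebra all_fingroup.
From mathcomp Require Import reals exp.
Set Implicit Arguments. Unset Strict Implicit. Unset Printing Implicit Defensive.
Import Order.TTheory GRing.Theory Num.Theory.
Local Open Scope ring_scope.

Section Defs.
Variable R : realType.

Section Generic.
Variable T : finType.

Definition mulK (K L : T -> T -> R) : T -> T -> R :=
  fun x y => \sum_(z : T) K x z * L z y.

Definition DKL (mu : T -> R) (K L : T -> T -> R) : R :=
  \sum_(x : T) \sum_(y : T)
     (if K x y == 0 then 0 else mu x * K x y * ln (K x y / L x y)).

Definition full_support_pmf (pi : T -> R) : Prop :=
  (forall x, 0 < pi x) /\ \sum_(x : T) pi x = 1.

Definition stochastic (P : T -> T -> R) : Prop :=
  (forall x y, 0 <= P x y) /\ (forall x, \sum_(y : T) P x y = 1).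

Definition stationary (pi : T -> R) (P : T -> T -> R) : Prop :=
  forall y, \sum_(x : T) pi x * P x y = pi y.

Definition massR (pi : T -> R) (A : {set T}) : R := \sum_(z in A) pi z.

Definition PiK (pi : T -> R) : T -> T -> R := fun _ y => pi y.

End Generic.

Section Orbits.
Variables (gT : finGroupType) (X : finType) (H : {group gT})
          (to : {action gT &-> X}).

Definition orbits : {set {set X}} := [set orbit to H x | x in [set: X]].

Definition orbT := {O : {set X} | O \in orbits}.

Definition gibbs (pi : X -> R) : X -> X -> R :=
  fun x y => if y \in orbit to H x then pi y / massR pi (orbit to H x) else 0.

End Orbits.
End Defs.

Section Bar.
Variables (R : realType) (gT : finGroupType) (X : finType) (H : {group gT})
          (to : {action gT &-> X}).

Definition pibar (pi : X -> R) : {O : {set X} | O \in orbits H to} -> R :=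
  fun O => massR pi (val O).

Definition Pbar (pi : X -> R) (P : X -> X -> R) :
  {O : {set X} | O \in orbits H to} -> {O : {set X} | O \in orbits H to} -> R :=
  fun Oi Oj => (massR pi (val Oi))^-1 *
     \sum_(x in val Oi) \sum_(y in val Oj) pi x * P x y.

Definition Pibar (pi : X -> R) :
  {O : {set X} | O \in orbits H to} -> {O : {set X} | O \in orbits H to} -> R :=
  PiK (pibar pi).
End Bar.
Arguments pibar {R gT X} H to pi _.
Arguments Pbar {R gT X} H to pi P _ _.
Arguments Pibar {R gT X} H to pi _ _.

(** Composing with the Gibbs orbit kernel on both sides forgets everything
    about [P] except its orbit-lumped version:
    [GPG(x,y) = pi(y)/pi(O(y)) * Pbar(O(x),O(y))], and likewise
    [Pi(x,y) = pi(y)/pi(O(y)) * Pibar(O(x),O(y))].  The common factor cancels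
    inside the logarithm, and summing the weights [pi(x)] and
    [pi(y)/pi(O(y))] over each orbit collapses the double sum over [X] to the
    double sum over orbits with weight [pibar]. *)

From HB Require Import structures.
From mathcomp Require Import all_boot all_order all_algebra all_fingroup.
From mathcomp Require Import reals exp.
Set Implicit Arguments. Unset Strict Implicit. Unset Printing Implicit Defensive.
Import Order.TTheory GRing.Theory Num.Theory.
Local Open Scope ring_scope.

Section KLSummand.
Variables (R : realType) (T : finType).

Definition kl_summand (k l : R) : R := if k == 0 then 0 else k * ln (k / l).

Lemma DKLE (mu : T -> R) (K L : T -> T -> R) :
  DKL mu K L = \sum_x mu x * \sum_y kl_summand (K x y) (L x y).
Proof.
apply: eq_bigr => x _; rewrite big_distrr; apply: eq_bigr => y _ /=.
by rewrite /kl_summand; case: ifP; rewrite ?mulr0 ?mulrA.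
Qed.

Lemma kl_summandZ (c k l : R) :
  c != 0 -> kl_summand (c * k) (c * l) = c * kl_summand k l.
Proof.
move=> c0; rewrite /kl_summand mulf_eq0 (negbTE c0) /=.
case: ifP => _; first by rewrite mulr0.
by rewrite invfM mulrACA divff // mul1r mulrA.
Qed.

Lemma massR_gt0 (pi : T -> R) (A : {set T}) z :
  (forall x, 0 < pi x) -> z \in A -> 0 < massR pi A.
Proof.
move=> pi_gt0 zA; rewrite /massR (bigD1 z) //= ltr_wpDr //.
by apply: sumr_ge0 => x _; apply: ltW.
Qed.

End KLSummand.

Section GibbsKernel.
Variables (R : realType) (gT : finGroupType) (X : finType)
  (H : {group gT}) (to : {action gT &-> X}) (pi : X -> R).

Local Notation orbT := {O : {set X} | O \in orbits H to}.
Local Notation O x := (orbit to H x).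

Lemma orbit_in_orbits x : O x \in orbits H to.
Proof. by apply/imsetP; exists x; rewrite ?inE. Qed.

Definition orbit_of x : orbT := exist _ (O x) (orbit_in_orbits x).

Lemma orbit_ofE x (i : orbT) : (orbit_of x == i) = (x \in val i).
Proof.
case: i => A /= A_orbit; rewrite -val_eqE /=.
by case/imsetP: A_orbit => z _ ->; apply: orbit_eq_mem.
Qed.

Lemma sum_orbit_of (F : orbT -> R) :
  \sum_x pi x * F (orbit_of x) = \sum_i pibar H to pi i * F i.
Proof.
rewrite (partition_big orbit_of xpredT) //=; apply: eq_bigr => i _.
rewrite (eq_bigr (fun x => pi x * F i)) => [|x /eqP-> //].
by rewrite -mulr_suml; congr (_ * _); apply: eq_bigl => x; rewrite orbit_ofE.
Qed.

Lemma mulK_gibbsl (K : X -> X -> R) x y :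
  mulK (gibbs H to pi) K x y = (massR pi (O x))^-1 * \sum_(z in O x) pi z * K z y.
Proof.
rewrite /mulK /gibbs big_distrr [RHS]big_mkcond /=; apply: eq_bigr => z _.
by case: ifP => _; rewrite ?mul0r ?mulr0 // mulrAC mulrC.
Qed.

Lemma mulK_gibbsr (K : X -> X -> R) x y :
  mulK K (gibbs H to pi) x y = pi y / massR pi (O y) * \sum_(w in O y) K x w.
Proof.
rewrite /mulK /gibbs big_distrr [RHS]big_mkcond /=; apply: eq_bigr => w _.
rewrite orbit_sym; case: ifP => [wy|_]; last by rewrite !mulr0.
have /eqP-> : O w == O y by rewrite orbit_eq_mem.
exact: mulrC.
Qed.

Lemma gibbs_mulK_gibbsE (P : X -> X -> R) x y :
  mulK (mulK (gibbs H to pi) P) (gibbs H to pi) x y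
  = pi y / massR pi (O y) * Pbar H to pi P (orbit_of x) (orbit_of y).
Proof.
rewrite mulK_gibbsr /Pbar /=; congr (_ * _).
under eq_bigr do rewrite mulK_gibbsl.
by rewrite -big_distrr exchange_big.
Qed.

Hypothesis pi_gt0 : forall x, 0 < pi x.

Lemma massR_orbit_gt0 x : 0 < massR pi (O x).
Proof. exact: massR_gt0 pi_gt0 (orbit_refl _ _ _). Qed.

Lemma pibar_gt0 (i : orbT) : 0 < pibar H to pi i.
Proof.
case: i => A A_orbit; rewrite /pibar /=.
by case/imsetP: A_orbit => z _ ->; apply: massR_orbit_gt0.
Qed.

Lemma sum_gibbs_weight (F : orbT -> R) :
  \sum_y pi y / massR pi (O y) * F (orbit_of y) = \sum_i F i.
Proof.
under eq_bigr do rewrite -mulrA.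
rewrite (sum_orbit_of (fun i => (pibar H to pi i)^-1 * F i)).
by apply: eq_bigr => i _; rewrite mulrA divff ?mul1r // gt_eqF ?pibar_gt0.
Qed.

End GibbsKernel.

Theorem proposition6p3 (R : realType) (gT : finGroupType) (X : finType)
    (H : {group gT}) (to : {action gT &-> X})
    (pi : X -> R) (P : X -> X -> R) :
  full_support_pmf pi -> stochastic P -> stationary pi P ->
  DKL pi (mulK (mulK (gibbs H to pi) P) (gibbs H to pi)) (PiK pi)
  = DKL (pibar H to pi) (Pbar H to pi P) (Pibar H to pi).
Proof.
move=> [pi_gt0 _] _ _; rewrite !DKLE -sum_orbit_of; apply: eq_bigr => x _.
congr (_ * _); rewrite -(sum_gibbs_weight pi_gt0); apply: eq_bigr => y _.
have w_gt0 : 0 < pi y / massR pi (orbit to H y) by rewrite divr_gt0 ?massR_orbit_gt0.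
have Pi_factor : PiK pi x y = pi y / massR pi (orbit to H y) * pibar H to pi (orbit_of H to y).
  by rewrite /PiK divfK // gt_eqF ?massR_orbit_gt0.
by rewrite gibbs_mulK_gibbsE Pi_factor kl_summandZ ?gt_eqF.
Qed.
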